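(* Assume $\mathfrak p=\mathfrak c$. Then every independent family $\mathcal I_0$ with $|\mathcal I_0|<\mathfrak c$ can be extended to a selective independent family. In particular, $\mathfrak p=\mathfrak c$ implies that selective maximal independent families exist.
   Context: $\mathfrak p$ is the pseudointersection number and $\mathfrak c=2^{\aleph_0}$. Independent family: $\mathcal I\subseteq[\omega]^\omega$ such that for all finite disjoint $\mathcal A,\mathcal B\subseteq\mathcal I$, $\bigcap\mathcal A\setminus\bigcup\mathcal B$ is infinite. $\mathsf{FF}(\mathcal I)$: finite partial functions $h:\mathcal I\to 2$; $\mathcal I^h:=\bigcap_{A\in\mathrm{dom}(h)}A^{h(A)}$, $A^0=A$, $A^1=\omega\setminus A$. Densely maximal: for every $X\in[\omega]^\omega$ and $h\in\mathsf{FF}(\mathcal I)$ there is $h'\supseteq h$ in $\mathsf{FF}(\mathcal I)$ with $\mathcal I^{h'}\setminus X$ or $\mathcal I^{h'}\cap X$ finite (densely maximal families are maximal independent). Density filter $\mathrm{fil}(\mathcal I)$: all $X\in[\omega]^\omega$ such that for every $h\in\mathsf{FF}(\mathcal I)$ there is $h'\supseteq h$ with $\mathcal I^{h'}\setminus X$ finite. $P$-filter: every countable subfamily has a pseudointersection in the filter. $Q$-filter: for every partition of $\omega$ into finite sets $\{I_n\}$ there is a member $A$ with $|A\cap I_n|\le1$ for all $n$. An independent family is selective if it is densely maximal and its density filter is both a $P$-filter and a $Q$-filter. *)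

From HB Require Import structures.
From mathcomp Require Import all_boot all_order.
From mathcomp Require Import boolp classical_sets cardinality.
Set Implicit Arguments. Unset Strict Implicit. Unset Printing Implicit Defensive.
Local Open Scope classical_set_scope.
Local Open Scope card_scope.

(* |F| < c, where c = 2^aleph0 = |P(omega)| *)
Definition card_lt_c {T} (F : set T) : Prop :=
  F #<= [set: set nat] /\ ~ ([set: set nat] #<= F).

Definition pseudoint (F : set (set nat)) (Y : set nat) : Prop :=
  infinite_set Y /\ forall X, F X -> finite_set (Y `\` X).

Definition SFIP (F : set (set nat)) : Prop :=
  forall G : set (set nat), finite_set G -> G `<=` F ->
    infinite_set (\bigcap_(X in G) X).

(* p is the least size of an SFIP family in [omega]^omega with no pseudointersection *)
Definition p_witness (F : set (set nat)) : Prop :=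
  (forall X, F X -> infinite_set X) /\ SFIP F /\ ~ (exists Y, pseudoint F Y).

Definition p_eq_c : Prop :=
  (forall F, p_witness F -> ~ card_lt_c F) /\
  (exists F, p_witness F /\ F #= [set: set nat]).

Definition independent (I : set (set nat)) : Prop :=
  (forall A, I A -> infinite_set A) /\
  forall A B : set (set nat), finite_set A -> finite_set B ->
    A `<=` I -> B `<=` I -> A `&` B = set0 ->
    infinite_set ((\bigcap_(X in A) X) `\` (\bigcup_(X in B) X)).

(* FF(I): finite partial functions I -> 2, given by a finite domain D and values h *)
Definition FF (I : set (set nat)) (D : set (set nat)) (h : set nat -> bool) : Prop :=
  finite_set D /\ D `<=` I.

Definition ff_ext (D : set (set nat)) (h : set nat -> bool)
    (D' : set (set nat)) (h' : set nat -> bool) : Prop :=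
  D `<=` D' /\ forall A, D A -> h' A = h A.

Definition setpow (A : set nat) (b : bool) : set nat := if b then ~` A else A.

Definition Ih (D : set (set nat)) (h : set nat -> bool) : set nat :=
  \bigcap_(A in D) setpow A (h A).

Definition densely_maximal (I : set (set nat)) : Prop :=
  independent I /\
  forall X : set nat, infinite_set X ->
  forall D h, FF I D h -> exists D' h', FF I D' h' /\ ff_ext D h D' h' /\
    (finite_set (Ih D' h' `\` X) \/ finite_set (Ih D' h' `&` X)).

Definition density_filter (I : set (set nat)) : set (set nat) :=
  [set X | infinite_set X /\
    forall D h, FF I D h -> exists D' h', FF I D' h' /\ ff_ext D h D' h' /\
      finite_set (Ih D' h' `\` X)].

Definition P_filter (F : set (set nat)) : Prop :=
  forall C : set (set nat), C `<=` F -> countable C ->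
    exists Y, F Y /\ pseudoint C Y.

Definition finite_partition (P : nat -> set nat) : Prop :=
  (forall n, finite_set (P n)) /\
  (forall m n, m <> n -> P m `&` P n = set0) /\
  (\bigcup_n P n = [set: nat]).

Definition Q_filter (F : set (set nat)) : Prop :=
  forall P : nat -> set nat, finite_partition P ->
    exists A, F A /\ forall n x y, A x -> A y -> P n x -> P n y -> x = y.

Definition selective (I : set (set nat)) : Prop :=
  densely_maximal I /\ P_filter (density_filter I) /\ Q_filter (density_filter I).

From mathcomp Require Import all_boot all_order.
From mathcomp Require Import boolp classical_sets cardinality.
From mathcomp Require Import zify.
From mathcomp Require wochoice.
Set Implicit Arguments. Unset Strict Implicit. Unset Printing Implicit Defensive.
Local Open Scope classical_set_scope.
Local Open Scope card_scope.

(* All tasks t : nat -> set nat are listed along a well-order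
   whose proper initial segments have size < c ([task_well_order]).  By
   transfinite recursion ([stages]) each task adds countably many new sets to
   the small independent family built so far: if the finite intersections of
   the t n are positive, the new sets put a pseudointersection of the t n into
   the density filter; if t partitions omega into finite pieces, they put a
   selector into it.  Such a step ([one_step_extension]) applies p = c to a
   small SFIP family of codes of finite "blocks" and reads the new sets off a
   chain of blocks coded in its pseudointersection.  The final family is then
   densely maximal (constant tasks), and its density filter is a P-filter
   (enumerated countable subfamilies) and a Q-filter (partitions). *)

Lemma finite_bounded (A : set nat) :
  finite_set A -> exists n, forall m, A m -> (m < n)%N.
Proof.
move=> /finite_seqP[s ->]; exists (\max_(i <- s) i).+1 => m /= ms.
by rewrite ltnS; apply: (@leq_bigmax_seq _ _ xpredT (fun i => i)).
Qed.

Lemma infinite_natP (A : set nat) :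
  infinite_set A <-> forall n, exists m, (n <= m)%N /\ A m.
Proof.
split=> [Ai n|H /finite_bounded[n Hn]]; last first.
  by have [m [nm /Hn]] := H n; rewrite ltnNge nm.
apply: contra_notP Ai => H; apply: (@sub_finite_set _ _ `I_n); last exact: finite_II.
by move=> m Am /=; rewrite ltnNge; apply/negP => nm; apply: H; exists m.
Qed.

Definition large {T} (A : set T) : Prop :=
  exists f : set nat -> T, (forall X, A (f X)) /\ injective f.
Definition small {T} (A : set T) : Prop := ~ large A.

Lemma small_card_lt (F : set (set nat)) : small F <-> card_lt_c F.
Proof.
have largeP : ([set: set nat] #<= F) <-> large F.
  split=> [/pcard_leP/injfunPex[f ff fi]|[f [fF fi]]].
    by exists f; split=> [X|X Y E]; [apply: ff|apply: fi; rewrite ?inE].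
  by apply/pcard_leP/injfunPex; exists f => [X _|X Y _ _]; [apply: fF|apply: fi].
split=> [sF|[_ H]]; last by move=> /largeP.
by split; [exact: card_leT|move=> /largeP].
Qed.

Lemma small_subset {T} (A B : set T) : A `<=` B -> small B -> small A.
Proof. by move=> AB sB [f [fA fi]]; apply: sB; exists f; split=> // X; apply: AB. Qed.

Lemma small_image {T U} (f : T -> U) (A : set T) : small A -> small (f @` A).
Proof.
move=> sA [g [gA gi]]; apply: sA.
have H X : exists a, A a /\ f a = g X by have [a Aa e] := gA X; exists a.
pose k X := proj1_sig (cid (H X)).
exists k; split=> [X|X Y e]; first by rewrite /k; case: cid => a [].
apply: gi; rewrite -(proj2 (proj2_sig (cid (H X)))) -(proj2 (proj2_sig (cid (H Y)))).
by rewrite -/(k X) -/(k Y) e.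
Qed.

Lemma small_injective {T U} (f : T -> U) (A : set T) :
  injective f -> small (f @` A) -> small A.
Proof.
move=> fi sA [g [gA gi]]; apply: sA; exists (f \o g).
by split=> [X|X Y /fi /gi]; [exists (g X)|].
Qed.

Definition pair_sets (X Y : set nat) : set nat :=
  [set n | if odd n then Y n./2 else X n./2].

Lemma pair_sets_inj X Y X' Y' : pair_sets X Y = pair_sets X' Y' -> X = X' /\ Y = Y'.
Proof.
move=> E; split; apply/funext => n; apply/propext.
  by have := congr1 (fun S => S n.*2) E; rewrite /pair_sets /= odd_double doubleK => ->.
have := congr1 (fun S => S n.*2.+1) E.
by rewrite /pair_sets /= odd_double /= uphalf_double => ->.
Qed.

(* Binary unions of small families are small: otherwise, via pair_sets, one
   of the two parts would receive an injection of P(omega). *)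
Lemma small_setU {T} (A B : set T) : small A -> small B -> small (A `|` B).
Proof.
move=> sA sB [g [gAB gi]].
case: (pselect (forall X, exists Y, B (g (pair_sets X Y)))) => [H|H].
  apply: sB; pose k X := proj1_sig (cid (H X)).
  exists (fun X => g (pair_sets X (k X))); split; first by move=> X; rewrite /k; case: cid.
  by move=> X Y /gi /pair_sets_inj[].
apply: sA; have [X0 HX0] : exists X0, forall Y, ~ B (g (pair_sets X0 Y)).
  apply: contra_notP H => H X; apply: contra_notP H => H'; exists X => Y BY.
  by apply: H'; exists Y.
exists (fun Y => g (pair_sets X0 Y)); split.
  by move=> Y; case: (gAB (pair_sets X0 Y)) => // /HX0.
by move=> Y Y' /gi /pair_sets_inj[].
Qed.

Definition code_sets (f : nat -> set nat) : set nat :=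
  [set k | exists n m, k = pickle (n, m) /\ f n m].

Lemma code_sets_inj : injective code_sets.
Proof.
have codeP f n m : code_sets f (pickle (n, m)) <-> f n m.
  split=> [[n' [m' [/(pcan_inj pickleK)[-> ->]]]]//|fnm].
  by exists n, m.
move=> f g E; apply/funext => n; apply/funext => m; apply/propext.
by rewrite -codeP E codeP.
Qed.

(* Countable unions of small families are small (a diagonal argument). *)
Lemma small_bigcup {T} (F : nat -> set T) :
  (forall n, small (F n)) -> small (\bigcup_n F n).
Proof.
move=> sF [g [gF gi]].
case: (pselect (forall n, exists Y, forall f, F n (g (code_sets f)) -> f n <> Y)) => [H|H].
  pose Yn n := proj1_sig (cid (H n)).
  have [n _ Fn] := gF (code_sets Yn).
  by have := proj2_sig (cid (H n)) Yn Fn; apply.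
have [n Hn] : exists n, forall Y, exists f, F n (g (code_sets f)) /\ f n = Y.
  apply: contra_notP H => H n; apply: contra_notP H => H'; exists n => Y.
  by apply: contra_notP H' => H'; exists Y => f Ff fY; apply: H'; exists f.
apply: (sF n); pose k Y := proj1_sig (cid (Hn Y)).
exists (fun Y => g (code_sets (k Y))); split; first by move=> Y; rewrite /k; case: cid => ? [].
move=> Y Y' /gi /code_sets_inj E.
have := proj2 (proj2_sig (cid (Hn Y))); have := proj2 (proj2_sig (cid (Hn Y'))).
by rewrite -/(k Y) -/(k Y') E => -> ->.
Qed.

(* Cantor's theorem: omega itself is small. *)
Lemma small_nat : small [set: nat].
Proof.
move=> [g [_ gi]]; pose D := [set n | exists X, g X = n /\ ~ X n].
case: (pselect (D (g D))) => H; first by have [X [/gi E]] := H; rewrite E.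
by apply: (H); exists D.
Qed.

Lemma small_range {T} (f : nat -> T) : small (range f).
Proof. exact: small_image small_nat. Qed.

Lemma small_SFIP_pseudoint (pc : p_eq_c) (F : set (set nat)) :
  small F -> SFIP F -> exists Y, pseudoint F Y.
Proof.
move=> sF sfF; apply: contrapT => nY; apply: (pc.1 F); last exact/small_card_lt.
split; last by split.
by move=> X FX; have := sfF [set X] (finite_set1 X); rewrite bigcap_set1; apply=> ? ->.
Qed.

Definition cells_infinite (I : set (set nat)) : Prop :=
  forall D h, finite_set D -> D `<=` I -> infinite_set (Ih D h).

Definition positive (I : set (set nat)) (X : set nat) : Prop :=
  forall D h, finite_set D -> D `<=` I -> infinite_set (Ih D h `&` X).

Definition capn (C : nat -> set nat) (N : nat) : set nat :=
  [set a | forall j, (j <= N)%N -> C j a].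

Lemma independentP I : independent I <-> cells_infinite I.
Proof.
split=> [[_ H] D h Df DI|H].
  pose A := D `&` [set X | h X = false]; pose B := D `&` [set X | h X = true].
  have AB0 : A `&` B = set0.
    by apply/funext => X; apply/propext; split=> // -[[_ /= hf] [_ /=]]; rewrite hf.
  have := H A B (finite_setIl _ Df) (finite_setIl _ Df)
    (fun X H => DI X H.1) (fun X H => DI X H.1) AB0.
  apply: sub_infinite_set => x [Hc Hu] X DX /=; rewrite /setpow.
  by case hX: (h X); [move=> Xx; apply: Hu; exists X|apply: Hc].
split=> [A IA|A B Af Bf AI BI AB].
  have := H [set A] (fun _ => false) (finite_set1 A).
  by rewrite /Ih bigcap_set1; apply=> ? ->.
have ABI : A `|` B `<=` I by move=> X [/AI|/BI].
have := H (A `|` B) (fun X => `[< B X >]); rewrite finite_setU.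
move=> /(_ (conj Af Bf) ABI); apply: sub_infinite_set => x Hx; split.
  move=> X AX; have := Hx X (or_introl AX); rewrite /setpow.
  case: asboolP => // BX; exfalso.
  by have : (A `&` B) X by []; rewrite AB.
by move=> [X BX Xx]; have := Hx X (or_intror BX); rewrite /setpow; case: asboolP.
Qed.

Lemma cells_infinite_sub I J : I `<=` J -> cells_infinite J -> cells_infinite I.
Proof. by move=> IJ H D h Df DI; apply: H => // X /DI /IJ. Qed.

Lemma Ih0 h : Ih set0 h = setT.
Proof. by rewrite /Ih bigcap_set0. Qed.

Lemma Ih_ext D h D' h' : ff_ext D h D' h' -> Ih D' h' `<=` Ih D h.
Proof. by move=> [DD' e] x Hx X DX; rewrite -e //; apply: Hx; exact: DD'. Qed.

Lemma setDI_finite (A X : set nat) :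
  finite_set (A `\` X) -> finite_set (A `&` X) -> finite_set A.
Proof.
move=> f1 f2; apply: (sub_finite_set (B := (A `\` X) `|` (A `&` X))); last first.
  by rewrite finite_setU.
by move=> x Ax; case: (pselect (X x)) => Xx; [right|left].
Qed.

Lemma density_filter_positive I X :
  cells_infinite I -> density_filter I X -> positive I X.
Proof.
move=> HI [_ HX] D h Df DI.
have [D' [h' [[D'f D'I] [ext fin]]]] := HX D h (conj Df DI).
apply: (sub_infinite_set (A := Ih D' h' `&` X)).
  by move=> x [Hx Xx]; split=> //; apply: Ih_ext ext x Hx.
by move=> fI; apply: (HI D' h' D'f D'I); apply: setDI_finite fin fI.
Qed.

Lemma dense_infinite I X : cells_infinite I ->
  (forall D h, FF I D h -> exists D' h', FF I D' h' /\ ff_ext D h D' h' /\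
      finite_set (Ih D' h' `\` X)) -> infinite_set X.
Proof.
move=> HI H Xf.
have [D' [h' [[D'f D'I] [_ fin]]]] := H set0 (fun _ => false) (conj (finite_set0 _) (sub0set _)).
by apply: (HI D' h' D'f D'I); apply: setDI_finite fin (finite_setIr _ Xf).
Qed.

Lemma density_filter_almost_superset I Y X :
  density_filter I Y -> finite_set (Y `\` X) -> density_filter I X.
Proof.
move=> [Yi HY] YX; split.
  by move=> Xf; apply: Yi; apply: setDI_finite YX (finite_setIr _ Xf).
move=> D h FF; have [D' [h' [FF' [ext fin]]]] := HY D h FF.
exists D', h'; split=> //; split=> //.
apply: (sub_finite_set (B := (Ih D' h' `\` Y) `|` (Y `\` X))); last by rewrite finite_setU.
by move=> x [Ix nX]; case: (pselect (Y x)) => Yx; [right|left].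
Qed.

Lemma density_filter_setI I X1 X2 : cells_infinite I ->
  density_filter I X1 -> density_filter I X2 -> density_filter I (X1 `&` X2).
Proof.
move=> HI [_ H1] [_ H2].
suff dense : forall D h, FF I D h -> exists D' h', FF I D' h' /\ ff_ext D h D' h' /\
    finite_set (Ih D' h' `\` (X1 `&` X2)).
  by split=> //; exact: dense_infinite dense.
move=> D h FF; have [D1 [h1 [FF1 [e1 f1]]]] := H1 D h FF.
have [D2 [h2 [FF2 [e2 f2]]]] := H2 D1 h1 FF1.
exists D2, h2; split=> //; split.
  case: e1 e2 => [s1 q1] [s2 q2]; split=> [? /s1 /s2 //|A DA].
  by rewrite q2 ?q1 //; exact: s1.
apply: (sub_finite_set (B := (Ih D1 h1 `\` X1) `|` (Ih D2 h2 `\` X2))); last first.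
  by rewrite finite_setU.
move=> x [Ix nX]; case: (pselect (X1 x)) => X1x.
  by right; split=> // X2x; apply: nX.
by left; split=> //; exact: Ih_ext e2 _ Ix.
Qed.

Lemma density_filter_capn I C N : cells_infinite I ->
  (forall j, density_filter I (C j)) -> density_filter I (capn C N).
Proof.
move=> HI HC; elim: N => [|N IH].
  suff -> : capn C 0 = C 0%N by [].
  apply/funext=> a; apply/propext; split=> [/(_ 0%N (leq0n _))//|Ca j].
  by rewrite leqn0 => /eqP->.
suff -> : capn C N.+1 = capn C N `&` C N.+1 by exact: density_filter_setI.
apply/funext=> a; apply/propext; split=> [H|[H1 H2] j].
  by split; [move=> j jN; apply: H; exact: leqW|apply: H].
by rewrite leq_eqVlt => /orP[/eqP->//|]; rewrite ltnS; exact: H1.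
Qed.

Lemma capn_const X N : capn (fun _ => X) N = X.
Proof. by apply/funext=> a; apply/propext; split=> [/(_ 0%N (leq0n _))|Xa j]. Qed.

Lemma density_filter_sub I J X :
  I `<=` J -> density_filter I X -> density_filter J X.
Proof.
move=> IJ [Xi HX]; split=> // D h [Df DJ].
have FF1 : FF I (D `&` I) h by split; [exact: finite_setIl | by move=> A []].
have [D1 [h1 [[D1f D1I] [[s1 e1] fin]]]] := HX _ _ FF1.
pose h' A := if pselect (D A) then h A else h1 A.
exists (D `|` D1), h'; split; [split|split].
- by rewrite finite_setU.
- by move=> A [/DJ|/D1I/IJ].
- by split=> [A DA|A DA]; [left|rewrite /h'; case: pselect].
apply: sub_finite_set fin => x [Ix nX]; split=> // A D1A.
have := Ix A (or_intror D1A); rewrite /h'; case: pselect => // DA.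
by rewrite e1 //; split=> //; exact: D1I.
Qed.

Lemma density_filter_setT I : density_filter I setT.
Proof.
split=> [|D h FF]; first exact: infinite_nat.
exists D, h; split=> //; split; first by split.
by rewrite setDT; exact: finite_set0.
Qed.

Lemma fresh_index (Z : nat -> set nat) (D : set (set nat)) :
  injective Z -> finite_set D -> exists m, ~ D (Z m).
Proof.
move=> Zi Df.
have : finite_set (Z @^-1` D) by apply: finite_preimage => // x y _ _; exact: Zi.
by move=> /finite_bounded[n Hn]; exists n => /Hn; rewrite ltnn.
Qed.

Lemma density_filter_new_sets I (Z : nat -> set nat) Y : injective Z ->
  (forall m, Z m `<=` Y) -> infinite_set Y -> density_filter (I `|` range Z) Y.
Proof.
move=> Zi ZY Yi; split=> // D h [Df DI].
have [m Dm] := fresh_index Zi Df.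
pose h' A := if pselect (A = Z m) then false else h A.
exists (D `|` [set Z m]), h'; split; [split|split].
- by rewrite finite_setU; split=> //; exact: finite_set1.
- by move=> A [/DI|->]; [|right; exists m].
- split=> [A DA|A DA]; first by left.
  by rewrite /h'; case: pselect => // AZ; rewrite AZ in DA.
suff -> : Ih (D `|` [set Z m]) h' `\` Y = set0 by exact: finite_set0.
apply/funext => x; apply/propext; split=> // -[Ix nY]; apply: nY; apply: (ZY m).
by have := Ix (Z m) (or_intror erefl); rewrite /h'; case: pselect.
Qed.

(* A block is a level k together with a list of entries ((x, sigma), a):
   the entry chooses a witness a for the point x and the 0/1-pattern sigma.
   Blocks are coded by naturals through pickle. *)
Definition Entry := (nat * seq bool * nat)%type.
Definition Block := (nat * seq Entry)%type.

Definition decode (n : nat) : Block := odflt (0%N, [::]) (unpickle n).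

Lemma decodeK b : decode (pickle b) = b.
Proof. by rewrite /decode pickleK. Qed.

Definition valid_block (q : nat -> nat) (k : nat) (s : seq Entry) : Prop :=
  (forall x sg, (x < k)%N -> size sg = k -> exists a, ((x, sg), a) \in s) /\
  uniq [seq q e.2 | e <- s] /\
  (forall e, e \in s -> (k <= e.2)%N /\ forall y, (y < k)%N -> q y <> q e.2).

Definition respects (B : set nat) : set Block :=
  [set b | forall e, e \in b.2 -> B e.1.1 -> B e.2].
Definition inside (C : nat -> set nat) (N : nat) : set Block :=
  [set b | forall e, e \in b.2 -> capn C N e.2].
Definition valid_from (q : nat -> nat) (K : nat) : set Block :=
  [set b | (K <= b.1)%N /\ valid_block q b.1 b.2].

Lemma inside_mono C N N' : (N' <= N)%N -> inside C N `<=` inside C N'.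
Proof. by move=> NN b H e es j jN; apply: H => //; exact: leq_trans jN NN. Qed.

Lemma valid_from_mono q K K' : (K' <= K)%N -> valid_from q K `<=` valid_from q K'.
Proof. by move=> KK b [Kb vb]; split=> //; exact: leq_trans KK Kb. Qed.

Fixpoint patterns k : seq (seq bool) :=
  if k is k'.+1 then [seq b :: s | b <- [:: true; false], s <- patterns k']
  else [:: [::]].

Lemma patterns_all sg : sg \in patterns (size sg).
Proof.
elim: sg => [|b s IH] //=; rewrite !mem_cat.
by case: b; apply/orP; [left|right; apply/orP; left]; exact: map_f.
Qed.

Lemma finite_preimage_seq (q : nat -> nat) (F : seq nat) :
  (forall n, finite_set (q @^-1` [set n])) -> finite_set [set a | q a \in F].
Proof.
move=> Hq; apply: (sub_finite_set (B := \bigcup_(n in [set` F]) (q @^-1` [set n]))).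
  by move=> a qa; exists (q a).
exact: bigcup_finite.
Qed.

Lemma entries_exist (q : nat -> nat) (cellC : nat -> set nat) (k : nat) (F : seq nat) :
  (forall n, finite_set (q @^-1` [set n])) -> (forall x, infinite_set (cellC x)) ->
  forall L : seq (nat * seq bool),
  exists s : seq Entry, [seq e.1 | e <- s] = L /\ uniq [seq q e.2 | e <- s] /\
   (forall e, e \in s -> cellC e.1.1 e.2 /\ (k <= e.2)%N /\ q e.2 \notin F).
Proof.
move=> Hq Hc; elim=> [|p L [s [sL [su sP]]]]; first by exists [::].
pose Fb := [set a | (a < k)%N] `|` [set a | q a \in F ++ [seq q e.2 | e <- s]].
have Fbf : finite_set Fb.
  by rewrite finite_setU; split; [exact: finite_II|exact: finite_preimage_seq].
have [a [ca na]] := infinite_setN0 (infinite_setD (Hc p.1) Fbf).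
exists ((p, a) :: s); split; first by rewrite /= sL.
have ka : (k <= a)%N by rewrite leqNgt; apply/negP => ak; apply: na; left.
have : q a \notin F ++ [seq q e.2 | e <- s] by apply/negP => H; apply: na; right.
rewrite mem_cat negb_or => /andP[qF qs].
split; first by rewrite /= qs.
by move=> e; rewrite inE => /orP[/eqP->|/sP//].
Qed.

Definition cell (E : set (set nat)) (x : nat) : set nat :=
  [set a | forall B, E B -> B x -> B a].

Lemma block_exists (q : nat -> nat) (C : nat -> set nat) (E : set (set nat)) N K k :
  (forall n, finite_set (q @^-1` [set n])) ->
  (forall x, infinite_set (cell E x `&` capn C N)) -> (K <= k)%N ->
  exists b : Block,
    b.1 = k /\ valid_from q K b /\ inside C N b /\ forall B, E B -> respects B b.
Proof.
move=> Hq Hc Kk.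
have [s [sL [su sP]]] := entries_exist k [seq q y | y <- iota 0 k] Hq Hc
  [seq (x, sg) | x <- iota 0 k, sg <- patterns k].
exists (k, s); split=> //; split; last split.
- split=> //; split; last split=> //.
  + move=> x sg /= xk sgk.
    have : (x, sg) \in [seq e.1 | e <- s].
      by rewrite sL; apply: allpairs_f; rewrite ?mem_iota ?add0n // -sgk patterns_all.
    by move=> /mapP[[[x' sg'] a] es /= [-> ->]]; exists a.
  + move=> e es; have [_ [ka qF]] := sP e es; split=> // y yk qy.
    by move: qF; rewrite -qy map_f // mem_iota add0n.
- by move=> e es; have [[_ ?] _] := sP e es.
- by move=> B EB e es /=; have [[H _] _] := sP e es; apply: H.
Qed.

Definition literals (I : set (set nat)) : set (set nat) := I `|` [set ~` A | A in I].

Lemma setpow_literal I A b : I A -> literals I (setpow A b).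
Proof. by case: b => IA /=; [right; exists A|left]. Qed.

Lemma cell_positive I C N E x : positive I (capn C N) -> finite_set E ->
  E `<=` literals I -> infinite_set (cell E x `&` capn C N).
Proof.
move=> HP Ef EB.
pose D := [set A | I A /\ (E A \/ E (~` A))].
pose h A := `[< ~ A x >].
have Df : finite_set D.
  apply: (sub_finite_set (B := E `|` [set ~` B | B in E])).
    by move=> A [_ [EA|EA]]; [left|right; exists (~` A); rewrite ?setCK].
  by rewrite finite_setU; split=> //; exact: finite_image.
have := HP D h Df (fun A H => H.1); apply: sub_infinite_set => a [Ia Ca]; split=> //.
move=> B EB' Bx; case: (EB B EB') => [IB|[A IA AB]].
  by have := Ia B (conj IB (or_introl EB')); rewrite /setpow /h; case: asboolP.
rewrite -AB in EB' Bx *.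
by have := Ia A (conj IA (or_intror EB')); rewrite /setpow /h; case: asboolP.
Qed.

(* The family of sets of codes to which p = c is applied. *)
Definition block_family I C q : set (set nat) :=
  [set decode @^-1` respects B | B in literals I] `|`
  range (fun N => decode @^-1` inside C N) `|`
  range (fun K => decode @^-1` valid_from q K).

Lemma block_family_small I C q : small I -> small (block_family I C q).
Proof.
move=> sI; do 2 (apply: small_setU; last exact: small_range).
by apply: small_image; apply: small_setU => //; exact: small_image.
Qed.

Definition good_blocks (C : nat -> set nat) (q : nat -> nat)
    (E : set (set nat)) (N K : nat) : set Block :=
  [set b | (forall B, E B -> respects B b) /\ inside C N b /\ valid_from q K b].

Lemma block_family_reduce I C q (s : seq (set nat)) :
  (forall X, X \in s -> block_family I C q X) ->
  exists E N K, finite_set E /\ E `<=` literals I /\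
    decode @^-1` good_blocks C q E N K `<=` [set a | forall X, X \in s -> X a].
Proof.
elim: s => [|X s IH] Hs.
  by exists set0, 0%N, 0%N; split; [exact: finite_set0|split].
have [|E [N [K [Ef [EB Hsub]]]]] := IH.
  by move=> Y Ys; apply: Hs; rewrite in_cons Ys orbT.
have := Hs X (mem_head _ _); move=> [[[B BB' <-]|[N' _ <-]]|[K' _ <-]].
- exists (E `|` [set B]), N, K; split.
    by rewrite finite_setU; split=> //; exact: finite_set1.
  split=> [A [/EB|->]//|a [HU [HV HT]] Y /predU1P[->|Ys]]; first by apply: HU; right.
  by apply: Hsub => //; split=> // B' EB'; apply: HU; left.
- exists E, (maxn N N'), K; do 2 split=> //.
  move=> a [HU [HV HT]] Y /predU1P[->|Ys]; first exact: (inside_mono (leq_maxr N N') HV).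
  by apply: Hsub => //; do 2 split=> //; exact: (inside_mono (leq_maxl N N') HV).
- exists E, N, (maxn K K'); do 2 split=> //.
  move=> a [HU [HV HT]] Y /predU1P[->|Ys]; first exact: (valid_from_mono (leq_maxr K K') HT).
  by apply: Hsub => //; do 2 split=> //; exact: (valid_from_mono (leq_maxl K K') HT).
Qed.

(* For positive capn C N there are infinitely many good blocks (of
   arbitrarily large level), hence infinitely many codes of them. *)
Lemma good_blocks_infinite I C q E N K : (forall n, finite_set (q @^-1` [set n])) ->
  positive I (capn C N) -> finite_set E -> E `<=` literals I ->
  infinite_set (decode @^-1` good_blocks C q E N K).
Proof.
move=> Hq HP Ef EB fin.
have f2 : finite_set (good_blocks C q E N K).
  apply: (sub_finite_set (B := pickle @^-1` (decode @^-1` good_blocks C q E N K))).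
    by move=> b Sb; rewrite /= decodeK.
  by apply: finite_preimage => // x y _ _; exact: (pcan_inj pickleK).
have [n Hn] := finite_bounded (finite_image fst f2).
have [b [b1 [HT [HV HU]]]] := block_exists (k := maxn K n) Hq
  (fun x => @cell_positive I C N E x HP Ef EB) (leq_maxl K n).
have := Hn b.1 (ex_intro2 _ _ b (conj HU (conj HV HT)) erefl).
by rewrite b1 ltnNge leq_maxr.
Qed.

Lemma block_family_SFIP I C q : (forall n, finite_set (q @^-1` [set n])) ->
  (forall N, positive I (capn C N)) -> SFIP (block_family I C q).
Proof.
move=> Hq HP G /finite_seqP[s Gs] GW.
have [|E [N [K [Ef [EB Hsub]]]]] := @block_family_reduce I C q s.
  by move=> X Xs; apply: GW; rewrite Gs.
apply: (@sub_infinite_set _ (decode @^-1` good_blocks C q E N K)).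
  by move=> a /Hsub Ha X GX; apply: Ha; move: GX; rewrite Gs.
exact: good_blocks_infinite.
Qed.

Lemma uniq_map_injective {T U : eqType} (f : T -> U) (s : seq T) :
  uniq [seq f e | e <- s] -> {in s &, injective f}.
Proof.
elim: s => [//|x s IH] /= /andP[xs us] e e'; rewrite !in_cons.
move=> /orP[/eqP->|es] /orP[/eqP->|e's] //= fe.
- by move: xs; rewrite fe map_f.
- by move: xs; rewrite -fe map_f.
- exact: IH.
Qed.

(* From a set Y0 of codes, pick a chain of valid blocks with separated
   levels: block i+1 has level above every witness of block i. Its
   witnesses form the set Ypts, and Zpts m collects the witnesses whose
   pattern has bit m set. *)
Section BlockChain.
Variables (q : nat -> nat) (Y0 : set nat) (pick : nat -> nat -> nat).
Hypothesis pickP : forall K L,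
  (L <= pick K L)%N /\ Y0 (pick K L) /\ valid_from q K (decode (pick K L)).

Definition block_max (b : Block) : nat := \max_(e <- b.2) e.2.

Fixpoint chain (i : nat) : nat * nat :=
  if i is i'.+1 then
    let p := chain i' in
    let K := maxn p.2.+1 (block_max (decode p.1)).+1 in (pick K p.1.+1, K)
  else (pick 0%N 0%N, 0%N).

Definition code (i : nat) : nat := (chain i).1.
Definition bound (i : nat) : nat := (chain i).2.
Definition entries (i : nat) : seq Entry := (decode (code i)).2.
Definition level (i : nat) : nat := (decode (code i)).1.
Definition Ypts : set nat := [set a | exists i e, e \in entries i /\ e.2 = a].
Definition Zpts (m : nat) : set nat :=
  [set a | exists i e, e \in entries i /\ e.2 = a /\ nth false e.1.2 m].

Lemma chainP i : Y0 (code i) /\ valid_from q (bound i) (decode (code i)).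
Proof. by case: i => [|i]; [exact: (pickP 0 0).2|exact: (pickP _ _).2]. Qed.

Lemma code_lt i j : (i < j)%N -> (code i < code j)%N.
Proof.
have codeS k : (code k < code k.+1)%N by exact: (pickP _ _).1.
elim: j => [//|j IH]; rewrite ltnS leq_eqVlt => /orP[/eqP->//|ij].
exact: ltn_trans (IH ij) (codeS j).
Qed.

Lemma code_inj : injective code.
Proof.
by move=> i j e; case: (ltngtP i j) => // /code_lt; rewrite e ltnn.
Qed.

Lemma bound_ge i : (i <= bound i)%N.
Proof.
by elim: i => [//|i IH]; rewrite /bound /=; apply: leq_trans (leq_maxl _ _).
Qed.

Lemma bound_mono i j : (i <= j)%N -> (bound i <= bound j)%N.
Proof.
elim: j => [|j IH]; first by rewrite leqn0 => /eqP->.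
rewrite leq_eqVlt => /orP[/eqP->//|]; rewrite ltnS => ij.
by apply: leq_trans (IH ij) _; rewrite /bound /=; apply: leq_trans (leq_maxl _ _).
Qed.

(* The witnesses of block i lie between its level and the bound of block
   i+1: blocks occupy disjoint consecutive intervals. *)
Lemma entry_bounds i e : e \in entries i ->
  [/\ (bound i <= level i)%N, (level i <= e.2)%N & (e.2 < bound i.+1)%N].
Proof.
move=> ei; have [_ [bl [_ [_ H]]]] := chainP i.
split=> //; first by have [] := H e ei.
rewrite /bound /=; apply: leq_trans (leq_maxr _ _); rewrite ltnS.
exact: (@leq_bigmax_seq _ _ xpredT (fun e : Entry => e.2)).
Qed.

Lemma unique_entry i j e e' : e \in entries i -> e' \in entries j ->
  q e.2 = q e'.2 -> i = j /\ e = e'.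
Proof.
have cross i' j' f f' : (i' < j')%N -> f \in entries i' -> f' \in entries j' ->
    q f.2 <> q f'.2.
  move=> ij fi f'j; have [_ _ h1] := entry_bounds fi; have [h2 _ _] := entry_bounds f'j.
  have [_ [_ [_ [_ H]]]] := chainP j'; apply: (H f' f'j).2.
  by apply: leq_trans h2; apply: leq_trans h1 _; exact: bound_mono.
move=> ei e'j qe; case: (ltngtP i j) => ij.
- by exfalso; exact: cross ij ei e'j qe.
- by exfalso; exact: cross ij e'j ei (esym qe).
- subst j; split=> //; have [_ [_ [_ [H _]]]] := chainP i.
  exact: (uniq_map_injective H).
Qed.

Lemma Ypts_selector a a' : Ypts a -> Ypts a' -> q a = q a' -> a = a'.
Proof.
by move=> [i [e [ei <-]]] [j [e' [e'j <-]]] /(unique_entry ei e'j)[_ ->].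
Qed.

Lemma Zpts_sub m : Zpts m `<=` Ypts.
Proof. by move=> a [i [e [ei [ea _]]]]; exists i, e. Qed.

Lemma Zpts_entry i e m : e \in entries i -> Zpts m e.2 <-> nth false e.1.2 m.
Proof.
move=> ei; split=> [[j [e' [e'j [e'a]]]]|em]; last by exists i, e.
by have [_ <-] := unique_entry e'j ei (congr1 q e'a).
Qed.

Lemma code_eventually X : finite_set (Y0 `\` X) ->
  exists i0, forall i, (i0 <= i)%N -> X (code i).
Proof.
move=> fin; have : finite_set (code @^-1` (Y0 `\` X)).
  by apply: finite_preimage => // a b _ _; exact: code_inj.
move=> /finite_bounded[i0 Hi0]; exists i0 => i ii0.
apply: contrapT => nX; have := Hi0 i (conj (chainP i).1 nX).
by rewrite ltnNge ii0.
Qed.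

Lemma Ypts_almost_sub C n :
  finite_set (Y0 `\` decode @^-1` inside C n) -> finite_set (Ypts `\` C n).
Proof.
move=> /code_eventually[i0 Hi0].
apply: (sub_finite_set (B := \bigcup_(i in `I_i0) [set e.2 | e in [set` entries i]])).
  move=> a [[i [e [ei <-]]] nC]; exists i; last by exists e.
  rewrite /= ltnNge; apply/negP => ii0; apply: nC.
  exact: (Hi0 i ii0 e ei n (leqnn n)).
apply: bigcup_finite; first exact: finite_II.
by move=> i _; apply: finite_image; exact: finite_seq.
Qed.

Variable I : set (set nat).
Hypothesis HI : cells_infinite I.
Hypothesis respectP : forall B, literals I B -> finite_set (Y0 `\` decode @^-1` respects B).

Lemma late_blocks_respect D h : finite_set D -> D `<=` I ->
  exists i1, forall i e, (i1 <= i)%N -> e \in entries i -> Ih D h e.1.1 -> Ih D h e.2.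
Proof.
move=> Df DI; pose E := [set setpow A (h A) | A in D].
have fin : finite_set (Y0 `\` \bigcap_(B in E) (decode @^-1` respects B)).
  apply: (sub_finite_set (B := \bigcup_(B in E) (Y0 `\` decode @^-1` respects B))).
    move=> a [Ya nX]; apply: contrapT => H; apply: nX => B EB.
    by apply: contrapT => nB; apply: H; exists B.
  apply: bigcup_finite; first exact: finite_image.
  by move=> B [A DA <-]; apply: respectP; apply: setpow_literal; exact: DI.
have [i1 Hi1] := code_eventually fin; exists i1 => i e ii1 ei Ix A DA.
by apply: (Hi1 i ii1 _ _ e ei); [exists A|exact: Ix].
Qed.

Lemma cells_Zpts_infinite D h (M : seq nat) (ev : nat -> bool) :
  finite_set D -> D `<=` I ->
  infinite_set (Ih D h `&` [set a | forall m, m \in M -> setpow (Zpts m) (ev m) a]).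
Proof.
move=> Df DI; have [x Ihx] := infinite_setN0 (@HI D h Df DI).
have [i1 Hi1] := late_blocks_respect h Df DI.
apply/infinite_natP => n.
pose i := (i1 + n + x.+1 + (\max_(m <- M) m).+1)%N.
have [_ [bl [complete _]]] := chainP i.
have il : (i <= level i)%N := leq_trans (bound_ge i) bl.
pose sg := mkseq (fun m => ~~ ev m) (level i).
have [|a ea] := complete x sg _ (size_mkseq _ _); first by apply: leq_trans il; lia.
have [_ la _] := entry_bounds ea.
exists a; split; first by apply: leq_trans la; apply: leq_trans il; lia.
split; first by apply: (Hi1 i _ _ ea) => //; lia.
move=> m mM; have Mi : (m < level i)%N.
  apply: leq_trans il; apply: leq_ltn_trans (_ : \max_(m <- M) m < i)%N; last lia.
  exact: (@leq_bigmax_seq _ _ xpredT (fun m => m)).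
have := Zpts_entry m ea; rewrite /= nth_mkseq // /setpow.
by case: (ev m) => /= Zm; [move/Zm|apply/Zm].
Qed.

Lemma Zpts_inj : injective Zpts.
Proof.
move=> m m' E; apply: contrapT => mm'.
have := @cells_Zpts_infinite set0 (fun _ => false) [:: m; m'] (fun j => j == m')
  (finite_set0 _) (sub0set _).
move=> /infinite_setN0[a [_ Ha]].
have := Ha m (mem_head _ _); have := Ha m'; rewrite !inE eqxx orbT /= => /(_ isT).
by rewrite E (negbTE (introN eqP mm')).
Qed.

Lemma Ypts_infinite : infinite_set Ypts.
Proof.
have := @cells_Zpts_infinite set0 (fun _ => false) [:: 0%N] (fun _ => false)
  (finite_set0 _) (sub0set _).
by apply: sub_infinite_set => a [_ /(_ 0%N (mem_head _ _))]; exact: Zpts_sub.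
Qed.

Lemma cells_infinite_Zpts : cells_infinite (I `|` range Zpts).
Proof.
move=> D h Df DIZ.
have [s2 Hs2] := (finite_seqP (D `\` I)).1 (finite_setD I Df).
pose idx A := if pselect (exists m, Zpts m = A) is left H then proj1_sig (cid H) else 0%N.
have idxP A : (exists m, Zpts m = A) -> Zpts (idx A) = A.
  by rewrite /idx; case: pselect => // H' _; case: cid.
have := @cells_Zpts_infinite (D `&` I) h [seq idx A | A <- s2] (fun m => h (Zpts m))
  (finite_setIl I Df) (fun A H => H.2).
apply: sub_infinite_set => a [Ia Za] A DA.
case: (pselect (I A)) => IA; first exact: Ia.
have As2 : A \in s2 by have : (D `\` I) A by []; rewrite Hs2.
have := Za (idx A) (map_f _ As2).
have HA : exists m, Zpts m = A by case: (DIZ A DA) => // -[m _ <-]; exists m.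
by rewrite idxP.
Qed.

End BlockChain.

Definition extension_step (I : set (set nat)) (C : nat -> set nat) (q : nat -> nat)
    (Y : set nat) (Z : nat -> set nat) : Prop :=
  cells_infinite (I `|` range Z) /\ density_filter (I `|` range Z) Y /\
  (forall n, finite_set (Y `\` C n)) /\ (forall a a', Y a -> Y a' -> q a = q a' -> a = a').

(* Under p = c, a small independent I admits an extension step for every
   sequence C whose finite intersections are I-positive and every
   finite-to-one q: apply p = c to the block family and read Y, Z off a
   chain of blocks coded in the pseudointersection. *)
Lemma one_step_extension (pc : p_eq_c) I C q : small I -> cells_infinite I ->
  (forall n, finite_set (q @^-1` [set n])) -> (forall N, positive I (capn C N)) ->
  exists Y Z, extension_step I C q Y Z.
Proof.
move=> sI HI Hq HP.
have [Y0 [Y0i Y0W]] := small_SFIP_pseudoint pc (@block_family_small I C q sI)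
  (block_family_SFIP Hq HP).
have pickE K L : exists y, (L <= y)%N /\ Y0 y /\ valid_from q K (decode y).
  have fin : finite_set (Y0 `\` decode @^-1` valid_from q K).
    by apply: Y0W; right; exists K.
  have [y [Ly [Yy Ty]]] := (infinite_natP _).1 (infinite_setD Y0i fin) L.
  by exists y; do 2 split=> //; apply: contrapT => nT; apply: Ty.
pose pick K L := proj1_sig (cid (pickE K L)).
have pickP : forall K L, (L <= pick K L)%N /\ Y0 (pick K L) /\
    valid_from q K (decode (pick K L)) by move=> K L; rewrite /pick; case: cid.
have respectP B : literals I B -> finite_set (Y0 `\` decode @^-1` respects B).
  by move=> BI; apply: Y0W; left; left; exists B.
exists (Ypts pick), (Zpts pick); split; first exact: cells_infinite_Zpts respectP.
split; first apply: density_filter_new_sets.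
- exact: Zpts_inj respectP.
- exact: Zpts_sub.
- exact: Ypts_infinite respectP.
split; last exact: Ypts_selector pickP.
by move=> n; apply: (Ypts_almost_sub pickP); apply: Y0W; left; right; exists n.
Qed.

Section StrictWellOrder.
Variables (T : eqType) (R : rel T).
Hypothesis HR : wochoice.well_order R.

Lemma well_order_min (S : set T) :
  (exists x, S x) -> exists z, S z /\ forall x, S x -> R z x.
Proof.
move=> [x Sx]; have [|z [[zS zlb] _]] := @HR (fun y => `[< S y >]).
  by exists x; rewrite unfold_in; apply/asboolP.
exists z; split; first by move: zS; rewrite unfold_in => /asboolP.
by move=> y Sy; apply: zlb; rewrite unfold_in; apply/asboolP.
Qed.

Let R_chain : wochoice.wo_chain R predT. Proof. by move=> A _; apply: HR. Qed.

Lemma well_order_antisym : antisymmetric R.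
Proof. by move=> x y; apply: (wochoice.wo_chain_antisymmetric R_chain). Qed.

Definition strict (x y : T) : Prop := R x y /\ x <> y.

(* A strictly decreasing chain would give a set without least element. *)
Lemma strict_wf : well_founded strict.
Proof.
move=> a; apply: contrapT => na.
have [|z [nz zmin]] := @well_order_min [set b | ~ Acc strict b]; first by exists a.
apply: nz; constructor => y [Ryz yz]; apply: contrapT => ny.
by apply: yz; apply: well_order_antisym; rewrite Ryz zmin.
Qed.

(* Transitivity, from the least element of {x, y, z}. *)
Lemma strict_trans x y z : strict x y -> strict y z -> strict x z.
Proof.
move=> [Rxy xy] [Ryz yz].
have [|m [Sm Hm]] := @well_order_min [set w | w = x \/ w = y \/ w = z].
  by exists x; left.
have Rxz : R x z.
  case: Sm => [|[|]] Em; subst m; first by apply: Hm; right; right.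
  - have -> : x = y by apply: well_order_antisym; rewrite Rxy Hm //; left.
    exact: Ryz.
  - have <- : y = z by apply: well_order_antisym; rewrite Ryz Hm //; right; left.
    exact: Rxy.
split=> // xz; subst z; apply: yz; apply: well_order_antisym; by rewrite Ryz Rxy.
Qed.

Lemma strict_trichotomy x y : strict x y \/ x = y \/ strict y x.
Proof.
case: (pselect (x = y)) => xy; first by right; left.
have /orP[Rxy|Ryx] := wochoice.wo_chainW R_chain (isT : predT x) (isT : predT y).
  by left.
by right; right; split=> // yx; apply: xy.
Qed.

End StrictWellOrder.

Definition Task := (nat -> set nat)%type.

Lemma Acc_preimage {A B} (R : B -> B -> Prop) (f : A -> B) (x : A) :
  Acc R (f x) -> Acc (fun a b => R (f a) (f b)) x.
Proof.
move Efx : (f x) => y Ay; elim: Ay x Efx => y' _ IH x Efx.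
by constructor => a Ra; apply: (IH (f a)) => //; rewrite -Efx.
Qed.

(* The tasks carry a well-order of type c: every proper initial segment is
   small. Take a well-order of Task; if some initial segment is large, the
   least such z0 has all its proper initial segments small, and Task embeds
   into the segment below z0, so the order can be transported. *)
Lemma task_well_order : exists lt : Task -> Task -> Prop, well_founded lt /\
  (forall x y z, lt x y -> lt y z -> lt x z) /\
  (forall x y, lt x y \/ x = y \/ lt y x) /\ (forall y, small [set x | lt x y]).
Proof.
have [R HR] := wochoice.well_ordering_principle Task.
case: (pselect (exists z, ~ small [set x | strict R x z])) => [Hz|Hz]; last first.
  exists (strict R); split; first exact: strict_wf.
  split; first exact: strict_trans.
  split; first exact: strict_trichotomy.
  by move=> y; apply: contrapT => ns; apply: Hz; exists y.
have [z0 [nz0 z0min]] := well_order_min HR Hz.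
have [g [gS gi]] : large [set x | strict R x z0] by apply: contrapT.
pose emb x := g (code_sets x).
have embi : injective emb by move=> x y /gi /code_sets_inj.
exists (fun x y => strict R (emb x) (emb y)); split.
  by move=> x; apply: Acc_preimage; exact: strict_wf.
split; first by move=> x y z; exact: strict_trans.
split.
  by move=> x y; case: (strict_trichotomy HR (emb x) (emb y)) => [H|[/embi H|H]]; auto.
move=> y; apply: (small_injective (f := emb)) => //.
apply: (@small_subset _ _ [set x | strict R x (emb y)]); first by move=> _ [x H <-].
apply: contrapT => ns; have [Ryz yz] := gS (code_sets y).
by apply: yz; apply: (well_order_antisym HR); rewrite Ryz z0min.
Qed.

(* If X u ~I^h is in the density filter, some extension of h has its cell
   almost inside X (the first way of deciding X below I^h). *)
Lemma density_filter_cell I D h X : density_filter I (X `|` ~` Ih D h) ->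
  FF I D h -> exists D' h', FF I D' h' /\ ff_ext D h D' h' /\
    finite_set (Ih D' h' `\` X).
Proof.
move=> [_ H] FFh; have [D' [h' [FF' [ext fin]]]] := H D h FFh.
exists D', h'; do 2 split=> //; apply: sub_finite_set fin => x [Ix nX].
split=> // -[//|nI]; apply: nI; exact: Ih_ext ext _ Ix.
Qed.

(* If some cell I^h2 meets X u ~I^h finitely, then h2 is compatible with h
   and their union is an extension of h whose cell meets X finitely (the
   second way of deciding X below I^h). *)
Lemma cell_merge I D h D2 h2 X : cells_infinite I -> FF I D h -> FF I D2 h2 ->
  finite_set (Ih D2 h2 `&` (X `|` ~` Ih D h)) ->
  exists D' h', FF I D' h' /\ ff_ext D h D' h' /\ finite_set (Ih D' h' `&` X).
Proof.
move=> HI [Df DI] [D2f D2I] fin2.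
have compat A : D A -> D2 A -> h A = h2 A.
  move=> DA D2A; apply: contrapT => hne; apply: (HI D2 h2 D2f D2I).
  suff <- : Ih D2 h2 `&` (X `|` ~` Ih D h) = Ih D2 h2 by [].
  apply/funext=> x; apply/propext; split=> [[]//|Ix]; split=> //; right => Ihx.
  have := Ihx A DA; have := Ix A D2A; rewrite /setpow.
  by case: (h A) hne; case: (h2 A).
pose hc A := if pselect (D A) then h A else h2 A.
exists (D `|` D2), hc; split; [split|split].
- by rewrite finite_setU.
- by move=> A [/DI|/D2I].
- by split=> [A DA|A DA]; [left|rewrite /hc; case: pselect].
apply: sub_finite_set fin2 => x [Ix Xx]; split; last by left.
move=> A D2A; have := Ix A (or_intror D2A); rewrite /hc; case: pselect => // DA.
by rewrite compat.
Qed.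

Lemma countable_enum {T} (C : set T) (x0 : T) : C x0 -> countable C ->
  exists t : nat -> T, (forall n, C (t n)) /\ forall X, C X -> exists n, t n = X.
Proof.
move=> Cx0 /pcard_injP[f fi].
pose t n := if pselect (exists X, C X /\ f X = n) is left H then proj1_sig (cid H) else x0.
exists t; split=> [n|X CX]; first by rewrite /t; case: pselect => // H; case: cid => X [].
exists (f X); rewrite /t; case: pselect => [H|H]; last by exfalso; apply: H; exists X.
by case: cid => X' [CX' fX] /=; apply: fi => //; exact: mem_set.
Qed.

Definition positive_task (I : set (set nat)) (t : Task) : Prop :=
  forall N, positive I (capn t N).

(* The index of some piece of t containing a (0 if there is none). *)
Definition piece (t : Task) (a : nat) : nat :=
  if pselect (exists n, t n a) is left H then proj1_sig (cid H) else 0%N.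

Lemma pieceE t : finite_partition t -> forall n a, t n a -> piece t a = n.
Proof.
move=> [_ [disj _]] n a tna; rewrite /piece; case: pselect => [H|H]; last first.
  by exfalso; apply: H; exists n.
case: cid => m tma /=; apply: contrapT => mn.
by have : (t m `&` t n) a by []; rewrite disj.
Qed.

Lemma piece_in t : finite_partition t -> forall a, t (piece t a) a.
Proof.
move=> fp a; have [_ [_ cov]] := fp.
have : (\bigcup_n t n) a by rewrite cov.
by move=> [n _ tna]; rewrite (pieceE fp tna).
Qed.

Lemma piece_finite_fibres t : finite_partition t ->
  forall n, finite_set (piece t @^-1` [set n]).
Proof.
move=> fp n; apply: (sub_finite_set (B := t n)); last by case: fp.
by move=> a /= <-; exact: piece_in.
Qed.

Lemma partition_not_positive I t : finite_partition t -> ~ positive_task I t.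
Proof.
move=> fp HP; have := HP 0%N set0 (fun _ => false) (finite_set0 _) (sub0set _).
rewrite Ih0 setTI; apply; apply: (sub_finite_set (B := t 0%N)).
  by move=> a /(_ 0%N (leqnn 0)).
by case: fp.
Qed.

Definition choose_step (I : set (set nat)) (C : nat -> set nat) (q : nat -> nat) :
    option (nat -> set nat) :=
  match pselect (exists p : set nat * (nat -> set nat), extension_step I C q p.1 p.2) with
  | left H => Some (proj1_sig (cid H)).2
  | right _ => None
  end.

(* The sets added at the stage of the task t over the family I: a positive
   task asks for a pseudointersection of the t n, a partition into finite
   pieces asks for a selector; other tasks add nothing. *)
Definition stage (I : set (set nat)) (t : Task) : option (nat -> set nat) :=
  if pselect (positive_task I t) then choose_step I t id
  else if pselect (finite_partition t) then choose_step I (fun _ => setT) (piece t)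
  else None.

Definition added (o : option (nat -> set nat)) : set (set nat) :=
  if o is Some Z then range Z else set0.

Lemma choose_step_indep I C q :
  cells_infinite I -> cells_infinite (I `|` added (choose_step I C q)).
Proof.
move=> HI; rewrite /choose_step; case: pselect => [H|H] /=; last by rewrite setU0.
by have [] := proj2_sig (cid H).
Qed.

Lemma stage_indep I t : cells_infinite I -> cells_infinite (I `|` added (stage I t)).
Proof.
move=> HI; rewrite /stage; case: pselect => H1; first exact: choose_step_indep.
by case: pselect => H2; [exact: choose_step_indep|rewrite /= setU0].
Qed.

Lemma choose_step_spec I C q : (exists Y Z, extension_step I C q Y Z) ->
  exists Y, density_filter (I `|` added (choose_step I C q)) Y /\
    (forall n, finite_set (Y `\` C n)) /\
    (forall a a', Y a -> Y a' -> q a = q a' -> a = a').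
Proof.
move=> [Y [Z st]]; rewrite /choose_step; case: pselect => [H|H]; last first.
  by exfalso; apply: H; exists (Y, Z).
by have [_ ?] := proj2_sig (cid H); exists (proj1_sig (cid H)).1.
Qed.

Lemma stage_positive (pc : p_eq_c) I t : positive_task I t -> small I ->
  cells_infinite I -> exists Y, density_filter (I `|` added (stage I t)) Y /\
    (forall n, finite_set (Y `\` t n)).
Proof.
move=> HP sI HI; rewrite /stage; case: pselect => // HP'.
have [|Y [HY [HC _]]] := @choose_step_spec I t id; last by exists Y.
apply: one_step_extension => // n.
by apply: (sub_finite_set (B := [set n])); [move=> a ->|exact: finite_set1].
Qed.

Lemma stage_partition (pc : p_eq_c) I t : finite_partition t -> small I ->
  cells_infinite I -> exists Y, density_filter (I `|` added (stage I t)) Y /\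
    (forall a a', Y a -> Y a' -> piece t a = piece t a' -> a = a').
Proof.
move=> fp sI HI; rewrite /stage.
case: pselect => [/(partition_not_positive fp)//|nP]; case: pselect => // fp'.
have [|Y [HY [_ Hs]]] := @choose_step_spec I (fun _ => setT) (piece t); last first.
  by exists Y.
apply: one_step_extension => //; first exact: piece_finite_fibres.
by move=> N D h Df DI; rewrite capn_const setIT; exact: HI.
Qed.

(* Transfinite recursion along a well-founded order lt on tasks: the stage of
   tau is computed over I0 together with everything added before tau. *)
Definition before (I0 : set (set nat)) (lt : Task -> Task -> Prop)
    (v : Task -> option (nat -> set nat)) (tau : Task) : set (set nat) :=
  I0 `|` [set A | exists s, lt s tau /\ added (v s) A].

Definition stages (I0 : set (set nat)) (lt : Task -> Task -> Prop)
    (wf : well_founded lt) : Task -> option (nat -> set nat) :=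
  Fix wf (fun _ => option (nat -> set nat))
    (fun tau rec => stage (I0 `|` [set A | exists s (H : lt s tau), added (rec s H) A]) tau).

Lemma stagesE I0 lt (wf : well_founded lt) tau :
  stages I0 wf tau = stage (before I0 lt (stages I0 wf) tau) tau.
Proof.
rewrite /stages Fix_eq; last first.
  move=> x f g Hfg; congr stage; apply/funext => A; apply/propext; split.
    by case=> [?|[s [H HA]]]; [left|right; exists s, H; rewrite -Hfg].
  by case=> [?|[s [H HA]]]; [left|right; exists s, H; rewrite Hfg].
congr stage; apply/funext => A; apply/propext; split.
  by case=> [?|[s [H HA]]]; [left|right; exists s].
by case=> [?|[s [H HA]]]; [left|right; exists s, H].
Qed.

Lemma finite_in_stage (I0 : set (set nat)) (lt : Task -> Task -> Prop)
    (v : Task -> option (nat -> set nat)) (P : Task -> Prop) :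
  (forall x y z, lt x y -> lt y z -> lt x z) ->
  (forall x y, lt x y \/ x = y \/ lt y x) ->
  forall D, finite_set D -> D `<=` I0 `|` [set A | exists s, P s /\ added (v s) A] ->
  D `<=` I0 \/ exists s, P s /\ D `<=` before I0 lt v s `|` added (v s).
Proof.
move=> tr tri D /finite_seqP[l ->]; elim: l => [|A l IH] Hl; first by left.
have [|Hl0|[s [Ps Hs]]] := IH.
- by move=> X Xl; apply: Hl; rewrite /= in_cons Xl orbT.
- case: (Hl A (mem_head _ _)) => [IA|[s' [Ps' As']]].
    by left => X /=; rewrite in_cons => /predU1P[->//|/Hl0].
  right; exists s'; split=> // X /=; rewrite in_cons => /predU1P[->|/Hl0 ?].
    by right.
  by left; left.
- case: (Hl A (mem_head _ _)) => [IA|[s' [Ps' As']]].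
    by right; exists s; split=> // X /=; rewrite in_cons => /predU1P[->|/Hs//]; left; left.
  case: (tri s s') => [ss'|[es|s's]].
  + right; exists s'; split=> // X /=; rewrite in_cons => /predU1P[->|/Hs]; first by right.
    move=> [[IX|[r [rs HX]]]|HX]; left; first by left.
      by right; exists r; split=> //; exact: tr rs ss'.
    by right; exists s.
  + subst s'; right; exists s; split=> // X /=.
    by rewrite in_cons => /predU1P[->|/Hs//]; right.
  + right; exists s; split=> // X /=; rewrite in_cons => /predU1P[->|/Hs//].
    by left; right; exists s'.
Qed.

Section Construction.
Variable pc : p_eq_c.
Variable I0 : set (set nat).
Hypothesis I0_indep : cells_infinite I0.
Hypothesis I0_small : small I0.
Variable lt : Task -> Task -> Prop.
Hypothesis lt_wf : well_founded lt.
Hypothesis lt_trans : forall x y z, lt x y -> lt y z -> lt x z.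
Hypothesis lt_total : forall x y, lt x y \/ x = y \/ lt y x.
Hypothesis lt_small : forall y, small [set x | lt x y].

Let v := stages I0 lt_wf.
Let Ib := before I0 lt v.

Definition Ifinal : set (set nat) := I0 `|` [set A | exists s, added (v s) A].

Lemma stage_cells_infinite tau : cells_infinite (Ib tau `|` added (v tau)).
Proof.
elim/(well_founded_ind lt_wf): tau => tau IH.
rewrite /v stagesE -/v; apply: stage_indep => D h Df DI.
case: (@finite_in_stage I0 lt v (lt^~ tau) lt_trans lt_total D Df DI) => [DI0|[s [st Ds]]].
  exact: I0_indep.
exact: IH s st D h Df Ds.
Qed.

(* The family built before tau is small: I0 together with countably many
   sets for each of the small set of earlier tasks. *)
Lemma before_small tau : small (Ib tau).
Proof.
pose zz s := if v s is Some z then z else (fun _ : nat => @set0 nat).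
apply: (@small_subset _ _ (I0 `|` \bigcup_n [set zz s n | s in [set s | lt s tau]])).
  move=> A [IA|[s [st HA]]]; first by left.
  right; move: HA; case Evs: (v s) => [z|] // [n _ <-].
  by exists n => //; exists s => //; rewrite /zz Evs.
apply: small_setU => //; apply: small_bigcup => n; apply: small_image; exact: lt_small.
Qed.

Lemma stage_sub_final tau : Ib tau `|` added (v tau) `<=` Ifinal.
Proof.
move=> A [[IA|[s [_ HA]]]|HA]; first by left.
  by right; exists s.
by right; exists tau.
Qed.

(* The final family is independent: finitely many of its sets come from a
   single stage. *)
Lemma final_cells_infinite : cells_infinite Ifinal.
Proof.
move=> D h Df DI.
case: (@finite_in_stage I0 lt v (fun _ => True) lt_trans lt_total D Df).
- by move=> A /DI [IA|[s HA]]; [left|right; exists s].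
- by move=> DI0; exact: I0_indep.
- by move=> [s [_ Ds]]; exact: stage_cells_infinite Ds.
Qed.

Lemma final_positive_before X tau : positive Ifinal X -> positive (Ib tau) X.
Proof.
move=> HX D h Df DI; apply: HX => // A /DI HA.
by apply: (@stage_sub_final tau); left.
Qed.

Lemma final_pseudoint tau : positive_task (Ib tau) tau ->
  exists Y, density_filter Ifinal Y /\ (forall n, finite_set (Y `\` tau n)).
Proof.
move=> HP; have [Y [fY fin]] := stage_positive pc HP (@before_small tau)
  (cells_infinite_sub (fun A HA => or_introl HA) (@stage_cells_infinite tau)).
exists Y; split=> //; apply: density_filter_sub fY.
by rewrite -stagesE; exact: stage_sub_final.
Qed.

Lemma final_selector t : finite_partition t ->
  exists Y, density_filter Ifinal Y /\
    (forall a a', Y a -> Y a' -> piece t a = piece t a' -> a = a').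
Proof.
move=> fp; have [Y [fY sel]] := stage_partition pc fp (@before_small t)
  (cells_infinite_sub (fun A HA => or_introl HA) (@stage_cells_infinite t)).
exists Y; split=> //; apply: density_filter_sub fY.
by rewrite -stagesE; exact: stage_sub_final.
Qed.

(* Dense maximality: either X u ~I^h is positive, and then it lies in the
   density filter by the constant task, or some cell meets it finitely. *)
Lemma final_densely_maximal : densely_maximal Ifinal.
Proof.
split; first exact/independentP/final_cells_infinite.
move=> X Xi D h FFh; pose X' := X `|` ~` Ih D h.
case: (pselect (positive Ifinal X')) => [pX|npX].
  have [|Y [fY fin]] := final_pseudoint (tau := fun _ => X').
    by move=> N; rewrite capn_const; exact: final_positive_before.
  have [D' [h' [FF' [ext fin']]]] :=
    density_filter_cell (density_filter_almost_superset fY (fin 0%N)) FFh.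
  by exists D', h'; do 2 split=> //; left.
have [D2 [h2 [D2f [D2I fin2]]]] : exists D2 h2, finite_set D2 /\ D2 `<=` Ifinal /\
    finite_set (Ih D2 h2 `&` X').
  apply: contrapT => H; apply: npX => D2 h2 D2f D2I fin2; apply: H.
  by exists D2, h2.
have [D' [h' [FF' [ext fin']]]] := cell_merge final_cells_infinite FFh (conj D2f D2I) fin2.
by exists D', h'; do 2 split=> //; right.
Qed.

(* P-filter: an enumeration of a countable subfamily is a positive task. *)
Lemma final_P_filter : P_filter (density_filter Ifinal).
Proof.
move=> C CF Cc; case: (pselect (exists X, C X)) => [[X0 CX0]|nC]; last first.
  exists setT; split; first exact: density_filter_setT.
  by split=> [|X CX]; [exact: infinite_nat|exfalso; apply: nC; exists X].
have [t [tC tonto]] := countable_enum CX0 Cc.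
have [|Y [fY fin]] := final_pseudoint (tau := t).
  move=> N; apply: final_positive_before; apply: density_filter_positive.
    exact: final_cells_infinite.
  by apply: density_filter_capn => [|j]; [exact: final_cells_infinite|apply: CF].
exists Y; split=> //; split; first by case: fY.
by move=> X /tonto[n <-].
Qed.

Lemma final_Q_filter : Q_filter (density_filter Ifinal).
Proof.
move=> P fp; have [Y [fY sel]] := final_selector fp.
exists Y; split=> // n x y Yx Yy Px Py; apply: sel => //.
by rewrite (pieceE fp Px) (pieceE fp Py).
Qed.

End Construction.

Lemma selective_extension (pc : p_eq_c) (I0 : set (set nat)) :
  independent I0 -> card_lt_c I0 -> exists I : set (set nat), I0 `<=` I /\ selective I.
Proof.
move=> /independentP HI0 /small_card_lt sI0.
have [lt [wf [tr [tri segs]]]] := task_well_order.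
exists (Ifinal I0 wf); split; first by move=> A IA; left.
split; first exact: final_densely_maximal.
by split; [exact: final_P_filter|exact: final_Q_filter].
Qed.

Theorem theorem4p1 :
  p_eq_c ->
  (forall I0 : set (set nat), independent I0 -> card_lt_c I0 ->
     exists I : set (set nat), I0 `<=` I /\ selective I) /\
  (exists I : set (set nat), selective I).
Proof.
move=> pc; split=> [|]; first exact: selective_extension.
have [||I [_ sel]] := @selective_extension pc set0; last by exists I.
- apply/independentP => D h Df D0; suff -> : Ih D h = setT by exact: infinite_nat.
  by apply/funext => x; apply/propext; split=> // _ A /D0.
- by apply/small_card_lt => -[f [f0 _]]; exact: (f0 set0).
Qed.
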